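(* For every integer $n\ge3$, \[ \sum_{k=3}^{n}(-1)^{k-1}{n\brace k}(k-1)!\left[(H_{k-1})^2-H^{(2)}_{k-1}\right]H_k=\frac{n^2+2}{3}\,B_{n-3}. \]
   Context: $B_m$ is the $m$th Bernoulli number ($\frac{t}{e^t-1}=\sum_{m\ge0}B_m\frac{t^m}{m!}$). ${n\brace k}$ is the Stirling number of the second kind. $H_k=\sum_{i=1}^k 1/i$ and $H_k^{(2)}=\sum_{i=1}^k 1/i^2$. *)

From mathcomp Require Import all_boot all_order all_algebra.
Set Implicit Arguments. Unset Strict Implicit. Unset Printing Implicit Defensive.
Import Order.TTheory GRing.Theory Num.Theory.
Local Open Scope ring_scope.

Fixpoint stirling2 (n k : nat) : nat :=
  match n, k with
  | 0, 0 => 1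
  | 0, _.+1 => 0
  | _.+1, 0 => 0
  | n'.+1, k'.+1 => (k'.+1 * stirling2 n' k'.+1 + stirling2 n' k')%N
  end.

(* Bernoulli numbers B_m with t/(e^t-1) = sum B_m t^m/m!  (so B_1 = -1/2).
   Equivalently ((e^t-1)/t) * (sum_m B_m t^m/m!) = 1 as formal power series,
   i.e. sum_{j=0}^m B_j/(j! (m-j+1)!) = [m == 0]; solving for B_m: *)
Fixpoint bern_seq (n : nat) : seq rat :=
  match n with
  | 0 => [:: 1]
  | n'.+1 =>
      let s := bern_seq n' in
      rcons s (- (n'.+1)`!%:R *
               \sum_(j < n'.+1) s`_j / (j`!%:R * (n'.+1 - j).+1`!%:R))
  end.

Definition bernoulli (m : nat) : rat := (bern_seq m)`_m.

Definition bernoulli_gf_spec (B : nat -> rat) : Prop :=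
  forall m : nat,
    \sum_(j < m.+1) B j / (j`!%:R * (m - j).+1`!%:R) = (m == 0%N)%:R.

Definition harm (k : nat) : rat := \sum_(1 <= i < k.+1) (i%:R)^-1.
Definition harm2 (k : nat) : rat := \sum_(1 <= i < k.+1) (i%:R ^+ 2)^-1.

From mathcomp Require Import all_boot all_order all_algebra.
From mathcomp Require Import ring zify.
Import Order.TTheory GRing.Theory Num.Theory.
Local Open Scope ring_scope.

(* Expand X^n = \sum_k S(n,k) (X)_k in falling factorials.  The coefficients of
   X, X^2, X^3 in (X)_(k+1) are (-1)^k k!, (-1)^(k+1) k! H_k and
   (-1)^k k! (H_k^2 - H_k^(2)) / 2, so the left-hand side is 2 F(n,3) with
   F(n,m) = \sum_k S(n,k) H_k [X^m](X)_k.  The Stirling recurrence and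
   H_(k+1) = H_k + 1/(k+1) give F(n+1,m+1) = F(n,m) - [m+1 = n] + [X^(m+1)] P_n,
   where P_n is the Faulhaber polynomial with P_n(x) - P_n(x-1) = x^n.  Since
   P_(n+1)' - (n+1) P_n is 1-periodic, hence constant, [X^(j+1)] P_(n+j) is
   (n+j)!/(n! (j+1)!) times B_n^+ = [X] P_n, and B_n^+ = B_n + [n = 1].
   Unrolling F three times yields ((n^2+2)/6) B_(n-3). *)

Lemma stirling2_eq0 (n k : nat) : (n < k)%N -> stirling2 n k = 0%N.
Proof.
elim: n k => [|n IH] [|k] //= hk.
by rewrite !IH // ?muln0 // ltnW.
Qed.

Lemma sum_stirling2S (V : zmodType) (f : nat -> V) (n : nat) :
  \sum_(k < n.+2) f k *+ stirling2 n.+1 k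
  = \sum_(k < n.+1) (f k *+ k + f k.+1) *+ stirling2 n k.
Proof.
rewrite big_ord_recl /= mulr0n add0r.
under eq_bigr do rewrite /= mulrnDr.
under [RHS]eq_bigr do rewrite mulrnDl.
rewrite !big_split /=; congr (_ + _).
rewrite big_ord_recr /= stirling2_eq0 // muln0 mulr0n addr0.
rewrite [RHS]big_ord_recl /= mulr0n mul0rn add0r.
by apply: eq_bigr => i _; rewrite /bump /= add1n mulrnA.
Qed.

Section FallingFactorial.

Context {R : comNzRingType}.

Definition ffactp (k : nat) : {poly R} := \prod_(i < k) ('X - (i%:R)%:P).

Lemma ffactpS k : ffactp k.+1 = ffactp k * ('X - (k%:R)%:P).
Proof. by rewrite /ffactp big_ord_recr. Qed.

Lemma size_ffactp k : (size (ffactp k) <= k.+1)%N.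
Proof.
elim: k => [|k IH]; first by rewrite /ffactp big_ord0 size_poly1.
rewrite ffactpS; apply: leq_trans (size_polyMleq _ _) _.
by rewrite size_XsubC addn2.
Qed.

Lemma Xn_ffactp n : 'X^n = \sum_(k < n.+1) ffactp k *+ stirling2 n k.
Proof.
elim: n => [|n IH].
  by rewrite big_ord_recl big_ord0 /= addr0 expr0 /ffactp big_ord0.
rewrite exprS IH mulr_sumr sum_stirling2S; apply: eq_bigr => k _.
rewrite mulrnAr; congr (_ *+ _).
rewrite ffactpS polyC_natr -mulr_natr; ring.
Qed.

Lemma coef_ffactpS k j :
  (ffactp k.+1)`_j.+1 = (ffactp k)`_j - (ffactp k)`_j.+1 * k%:R.
Proof. by rewrite ffactpS mulrBr coefB coefMX coefMC. Qed.

Lemma coef0_ffactp k : (ffactp k.+1)`_0 = 0.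
Proof.
elim: k => [|k IH]; rewrite ffactpS mulrBr coefB coefMX coefMC sub0r.
  by rewrite mulr0 oppr0.
by rewrite IH mul0r oppr0.
Qed.

Lemma coef1_ffactp k : (ffactp k.+1)`_1 = (-1) ^+ k * k`!%:R.
Proof.
elim: k => [|k IH].
  by rewrite coef_ffactpS /ffactp big_ord0 !coefC mulr0 subr0 expr0 mulr1.
by rewrite coef_ffactpS coef0_ffactp IH factS natrM exprS; ring.
Qed.

Lemma horner_ffactpS k x : (ffactp k.+1).[x] = (ffactp k).[x] * (x - k%:R).
Proof. by rewrite ffactpS hornerM hornerXsubC. Qed.

Lemma horner_ffactp_shift k x : (ffactp k.+1).[x] = x * (ffactp k).[x - 1].
Proof.
elim: k => [|k IH].
  by rewrite horner_ffactpS /ffactp big_ord0 !hornerC subr0 mul1r mulr1.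
rewrite horner_ffactpS IH horner_ffactpS -natr1; ring.
Qed.

End FallingFactorial.

Arguments ffactp R k : clear implicits.

Section PolyDifference.

Context {R : numDomainType}.

Definition diffp (p : {poly R}) := p - (p \Po ('X - 1)).

Lemma horner_diffp p x : (diffp p).[x] = p.[x] - p.[x - 1].
Proof. by rewrite /diffp hornerD hornerN horner_comp hornerXsubC. Qed.

Lemma diffpB p q : diffp (p - q) = diffp p - diffp q.
Proof. by rewrite /diffp raddfB /=; ring. Qed.

Lemma diffpZ a p : diffp (a *: p) = a *: diffp p.
Proof. by rewrite /diffp linearZ /= scalerBr. Qed.

Lemma deriv_diffp p : (diffp p)^`() = diffp p^`().
Proof. by rewrite /diffp derivB deriv_comp derivXsubC mulr1. Qed.

Lemma poly_nat_roots (p : {poly R}) : (forall i : nat, p.[i%:R] = 0) -> p = 0.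
Proof.
move=> hp; apply/eqP; apply: contraT => hp0.
have := max_poly_roots hp0 (rs := [seq i%:R | i <- iota 0 (size p)]).
rewrite size_map size_iota ltnn; apply.
  by apply/allP => y /mapP [i _ ->]; rewrite /root hp.
by rewrite map_inj_uniq ?iota_uniq // => i j /eqP; rewrite eqr_nat => /eqP.
Qed.

Lemma diffp_eq0 p : diffp p = 0 -> p = (p.[0])%:P.
Proof.
move=> h; apply/eqP; rewrite -subr_eq0; apply/eqP.
apply: poly_nat_roots => i; rewrite hornerD hornerN hornerC.
elim: i => [|i IH]; first by rewrite subrr.
move/(congr1 (horner^~ i.+1%:R)): h; rewrite horner_diffp hornerC -natr1 addrK.
by move/eqP; rewrite subr_eq0 => /eqP ->.
Qed.

End PolyDifference.

Lemma harm0 : harm 0 = 0.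
Proof. by rewrite /harm big_geq. Qed.

Lemma harmS k : harm k.+1 = harm k + (k.+1%:R)^-1.
Proof. by rewrite /harm big_nat_recr. Qed.

Lemma harm20 : harm2 0 = 0.
Proof. by rewrite /harm2 big_geq. Qed.

Lemma harm2S k : harm2 k.+1 = harm2 k + (k.+1%:R ^+ 2)^-1.
Proof. by rewrite /harm2 big_nat_recr. Qed.

Lemma natrS_neq0 (k : nat) : (k.+1%:R : rat) != 0.
Proof. by rewrite pnatr_eq0. Qed.

Lemma natr_fact_neq0 (k : nat) : (k`!%:R : rat) != 0.
Proof. by rewrite pnatr_eq0 -lt0n fact_gt0. Qed.

Lemma coef2_ffactp k :
  (ffactp rat k.+1)`_2 = (-1) ^+ k.+1 * k`!%:R * harm k.
Proof.
elim: k => [|k IH].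
  by rewrite harm0 mulr0 coef_ffactpS /ffactp big_ord0 !coefC mulr0 subr0.
rewrite coef_ffactpS coef1_ffactp IH harmS factS natrM !exprS.
by field; rewrite nat1r natrS_neq0.
Qed.

Lemma coef3_ffactp k :
  (ffactp rat k.+1)`_3 = (-1) ^+ k * k`!%:R * (harm k ^+ 2 - harm2 k) / 2.
Proof.
elim: k => [|k IH].
  by rewrite harm0 harm20 coef_ffactpS /ffactp big_ord0 !coefC /= subrr !mulr0 mul0r.
rewrite coef_ffactpS coef2_ffactp IH harmS harm2S factS natrM !exprS.
by field; rewrite nat1r natrS_neq0.
Qed.

(* [(X + 1) (X)_k / (k + 1)] is the antidifference of [(X)_k] vanishing at -1. *)
Definition powsum (n : nat) : {poly rat} :=
  \sum_(k < n.+1) ((k.+1%:R)^-1 *: (('X + 1) * ffactp rat k)) *+ stirling2 n k.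

Lemma horner_powsum n x : (powsum n).[x] =
  \sum_(k < n.+1) ((k.+1%:R)^-1 * ((x + 1) * (ffactp rat k).[x])) *+ stirling2 n k.
Proof.
rewrite /powsum horner_sum; apply: eq_bigr => k _.
by rewrite hornerMn hornerZ hornerM hornerD hornerX hornerC.
Qed.

Lemma diffp_powsum n : diffp (powsum n) = 'X^n.
Proof.
apply/eqP; rewrite -subr_eq0; apply/eqP; apply: poly_nat_roots => i.
set x : rat := i%:R.
rewrite hornerD hornerN horner_diffp; apply/eqP; rewrite subr_eq0; apply/eqP.
rewrite !horner_powsum -sumrB (Xn_ffactp n) horner_sum; apply: eq_bigr => k _.
rewrite hornerMn -mulrnBl; congr (_ *+ _).
have e := horner_ffactp_shift k x; rewrite horner_ffactpS in e.
by rewrite subrK -e -natr1; field; rewrite natr1 natrS_neq0.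
Qed.

Lemma coef_powsum n j : (powsum n)`_j.+1 =
  \sum_(k < n.+1) ((k.+1%:R)^-1 * ((ffactp rat k)`_j + (ffactp rat k)`_j.+1))
                    *+ stirling2 n k.
Proof.
rewrite /powsum coef_sum; apply: eq_bigr => k _.
by rewrite coefMn coefZ mulrDl mul1r coefD coefXM.
Qed.

Lemma size_powsum n : (size (powsum n) <= n.+2)%N.
Proof.
apply/leq_sizeP => -[|j] // hj; rewrite coef_powsum big1 // => k _.
have hk := ltn_ord k; have hs := size_ffactp (R := rat) k.
by rewrite !nth_default ?addr0 ?mulr0 ?mul0rn //; apply: leq_trans hs _; lia.
Qed.

Lemma coef_powsum_deriv n j :
  (powsum n.+1)`_j.+2 * j.+2%:R = n.+1%:R * (powsum n)`_j.+1.
Proof.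
set D := (powsum n.+1)^`() - n.+1%:R *: powsum n.
have diffD : diffp D = 0.
  rewrite diffpB diffpZ -deriv_diffp !diffp_powsum derivXn.
  by rewrite scaler_nat subrr.
have /(congr1 (fun p : {poly rat} => p`_j.+1)) := diffp_eq0 _ diffD.
rewrite coefC /D coefB coefZ coef_deriv mulr_natr => /eqP.
by rewrite subr_eq0 => /eqP.
Qed.

(* Bernoulli numbers with the convention [B_1 = +1/2]. *)
Definition bernoulli_plus (n : nat) : rat := (powsum n)`_1.

Lemma coef_powsum_fact n j : (powsum (n + j))`_j.+1 =
  (n + j)`!%:R / (n`!%:R * j.+1`!%:R) * bernoulli_plus n.
Proof.
elim: j => [|j IH].
  by rewrite addn0 [1`!]/= mulr1 divff ?mul1r ?natr_fact_neq0.
apply: (mulIf (natrS_neq0 j.+1)); rewrite addnS coef_powsum_deriv IH.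
rewrite factS [j.+2`!]factS !natrM; field.
by rewrite !natr_fact_neq0 nat1r -natrD !pnatr_eq0.
Qed.

(* [bern_transform g m] is the coefficient of [t^m] in
   [((e^t - 1)/t) * \sum_j g j t^j / j!]. *)
Definition bern_transform (g : nat -> rat) (m : nat) : rat :=
  \sum_(j < m.+1) g j / (j`!%:R * (m - j).+1`!%:R).

Lemma bern_transform_inj f g :
  (forall m, bern_transform f m = bern_transform g m) -> f =1 g.
Proof.
move=> h m; elim/ltn_ind: m => m IH.
have := h m; rewrite /bern_transform !big_ord_recr /= subnn.
rewrite (eq_bigr (fun j : 'I_m => g j / (j`!%:R * (m - j).+1`!%:R))); last first.
  by move=> j _; rewrite IH.
by move/addrI/(mulIf _); apply; rewrite invr_eq0 mulf_neq0 ?natr_fact_neq0.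
Qed.

Lemma bern_transform_bernoulli_plus m :
  bern_transform bernoulli_plus m = (m`!%:R)^-1.
Proof.
have := congr1 (horner^~ 1) (diffp_powsum m).
rewrite horner_diffp subrr hornerXn expr1n horner_coef0.
rewrite (horner_coef_wide _ (size_powsum m)) big_ord_recl expr0 mulr1 addrC addKr.
under eq_bigr do rewrite expr1n mulr1.
rewrite (reindex_inj rev_ord_inj) /= => hsum.
apply: (mulfI (natr_fact_neq0 m)); rewrite mulfV ?natr_fact_neq0 // -[RHS]hsum.
rewrite /bern_transform mulr_sumr; apply: eq_bigr => j _.
have hj : (j <= m)%N by rewrite -ltnS.
rewrite /bump /= add1n subSS.
have := coef_powsum_fact j (m - j); rewrite subnKC // => ->.
by rewrite mulrA mulrAC.
Qed.

Lemma size_bern_seq n : size (bern_seq n) = n.+1.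
Proof. by elim: n => [|n IH] //=; rewrite size_rcons IH. Qed.

Lemma nth_bern_seq n j : (j <= n)%N -> (bern_seq n)`_j = bernoulli j.
Proof.
elim: n => [|n IH]; first by rewrite leqn0 => /eqP ->.
rewrite leq_eqVlt => /predU1P [-> //|hj].
by rewrite /= nth_rcons size_bern_seq hj IH.
Qed.

Lemma bern_transform_bernoulli m : bern_transform bernoulli m = (m == 0)%:R.
Proof.
case: m => [|m].
  by rewrite /bern_transform big_ord1 /bernoulli /= divr1.
rewrite /bern_transform big_ord_recr /= subnn [1`!]/= mulr1.
have -> : bernoulli m.+1 = - m.+1`!%:R *
    \sum_(j < m.+1) bernoulli j / (j`!%:R * (m.+1 - j).+1`!%:R).
  rewrite {1}/bernoulli /= nth_rcons size_bern_seq ltnn eqxx; congr (_ * _).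
  by apply: eq_bigr => j _; rewrite nth_bern_seq // -ltnS.
by rewrite -mulNrn -mulr_natr; field; rewrite natr_fact_neq0.
Qed.

Lemma bernoulli_plusE j : bernoulli_plus j = bernoulli j + (j == 1%N)%:R.
Proof.
move: j; apply: bern_transform_inj => m; rewrite bern_transform_bernoulli_plus.
rewrite [RHS]/bern_transform; under eq_bigr do rewrite mulrDl.
rewrite big_split /= -/(bern_transform bernoulli m) bern_transform_bernoulli.
case: m => [|m]; first by rewrite big_ord1 mul0r addr0 invr1.
rewrite 2!big_ord_recl big1 => [|i _]; last by rewrite mul0r.
by rewrite /= /bump /= subSS mul0r !add0r addr0 mul1r addn0 subn0 /= mul1r.
Qed.

Definition harm_coef (n m : nat) : rat :=
  \sum_(k < n.+1) (harm k * (ffactp rat k)`_m) *+ stirling2 n k.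

Lemma harm_coef0 n : harm_coef n 0 = 0.
Proof.
rewrite /harm_coef big1 // => -[[|k] hk] _ /=.
  by rewrite harm0 mul0r mul0rn.
by rewrite coef0_ffactp mulr0 mul0rn.
Qed.

Lemma harm_coefS n m :
  harm_coef n.+1 m.+1 = harm_coef n m - (m.+1 == n)%:R + (powsum n)`_m.+1.
Proof.
have coefXn : \sum_(k < n.+1) (ffactp rat k)`_m.+1 *+ stirling2 n k = (m.+1 == n)%:R.
  by rewrite -coefXn (Xn_ffactp n) coef_sum; apply: eq_bigr => k _; rewrite coefMn.
rewrite /harm_coef (sum_stirling2S _ (fun k => harm k * (ffactp rat k)`_m.+1)).
rewrite coef_powsum -coefXn -sumrN -!big_split /=; apply: eq_bigr => k _.
rewrite -mulNrn -!mulrnDl; congr (_ *+ _).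
rewrite coef_ffactpS harmS -mulr_natr.
by field; rewrite nat1r natrS_neq0.
Qed.

Lemma harm_coef3 p :
  harm_coef p.+3 3 = (p.+3 ^ 2 + 2)%:R / 6 * bernoulli p.
Proof.
rewrite !harm_coefS harm_coef0.
have := coef_powsum_fact p 1; rewrite addn1 => ->.
have := coef_powsum_fact p 2; rewrite addn2 => ->.
rewrite -/(bernoulli_plus p) bernoulli_plusE !eqSS (eq_sym p 1%N) !factS !natrM.
have -> : ((p.+3 ^ 2 + 2)%:R : rat) = p%:R ^+ 2 + 6 * p%:R + 11.
  by rewrite natrD natrX -addn3 natrD; ring.
by case: eqP => [<-|_] /=; rewrite fact0; field; rewrite natr_fact_neq0.
Qed.

Lemma stirling_harm_sumE n : (3 <= n)%N ->
  \sum_(3 <= k < n.+1)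
     (-1) ^+ k.-1 * (stirling2 n k)%:R * (k.-1)`!%:R
       * ((harm k.-1) ^+ 2 - harm2 k.-1) * harm k
  = 2 * harm_coef n 3.
Proof.
move=> hn.
rewrite /harm_coef mulr_sumr.
rewrite -(big_mkord xpredT (fun k => 2 * (harm k * (ffactp rat k)`_3 *+ stirling2 n k))).
rewrite [RHS](big_cat_nat _ (n := 3)) //=; last exact: ltnW.
rewrite [X in _ = X + _]big_nat_cond [X in _ = X + _]big1 ?add0r; last first.
  move=> k /andP [/andP [_ hk] _].
  by rewrite nth_default ?mulr0 ?mul0rn ?mulr0 //; apply: leq_trans (size_ffactp k) _.
apply: eq_big_nat => -[|k] // _.
by rewrite coef3_ffactp -mulr_natr; field.
Qed.

Theorem mainTheorem3 (n : nat) (hn : (3 <= n)%N) :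
  \sum_(3 <= k < n.+1)
     (-1) ^+ k.-1 * (stirling2 n k)%:R * (k.-1)`!%:R
       * ((harm k.-1) ^+ 2 - harm2 k.-1) * harm k
  = ((n ^ 2 + 2)%:R / 3%:R) * bernoulli (n - 3) :> rat.
Proof.
rewrite stirling_harm_sumE //; case: n hn => [|[|[|p]]] // _.
by rewrite harm_coef3 !subSS subn0; field.
Qed.
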